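(* Let $X\subset\mathbb R^2$ and let $\{\alpha_t:[0,1]\to X\}$ be a countable collection of nonconstant oscillatory geodesics, each parameterized proportional to total oscillation. Then there exists a line $l$ in the plane that is transverse to $\alpha_t$ for every $t$.
   Context: Total oscillation: let $g:\mathbb R^2\to[-1,1]$ depend only on $x_1$ with $g=-1$ for $x_1\le-3$, $\frac12(x_1+1)$ on $[-3,-1]$, $0$ on $[-1,1]$, $\frac12(x_1-1)$ on $[1,3]$, $1$ for $x_1\ge3$; for distinct parallel lines $(P,Q)$, $g_{(P,Q)}=g\circ h_{(P,Q)}$ with $h_{(P,Q)}$ a similarity sending $P$ to $\{x_1=-3\}$, $Q$ to $\{x_1=3\}$; $o(f,(P,Q))=\sup-\sum_{i=1}^k g_{(P,Q)}(f(a_{i-1}))g_{(P,Q)}(f(a_i))$ over finite $a\le a_0\le\dots\le a_k\le b$; with a fixed countable dense set $\{(P_i,Q_i)\}$ of pairs of parallel lines, $\mathcal T(\alpha)=\sum_i2^{-i}\frac{o(\alpha,(P_i,Q_i))}{1+o(\alpha,(P_i,Q_i))}$. An oscillatory geodesic in $X$ is a path of minimal $\mathcal T$ among paths in $X$ homotopic to it rel endpoints; $\alpha:[0,1]\to X$ is parameterized proportional to total oscillation if $\mathcal T(\alpha|_{[0,t]})=t\,\mathcal T(\alpha)$ for all $t$. A line $l$ is transverse to a path $\gamma:[a,b]\to X$ if no nonempty open interval $(c,d)\subset[a,b]$ is mapped by $\gamma$ into a line segment parallel to $l$. *)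

From Stdlib Require Import Reals List.
From Coquelicot Require Import Coquelicot.
Open Scope R_scope.

Definition pt := (R * R)%type.
Definition dot (x y : pt) : R := fst x * fst y + snd x * snd y.
Definition dist2 (x y : pt) : R :=
  sqrt ((fst x - fst y)^2 + (snd x - snd y)^2).

Definition gfun (x : R) : R :=
  if Rle_dec x (-3) then -1
  else if Rle_dec x (-1) then (x + 1) / 2
  else if Rle_dec x 1 then 0
  else if Rle_dec x 3 then (x - 1) / 2
  else 1.

Definition g (x : pt) : R := gfun (fst x).

(* An (ordered) pair of distinct parallel lines (P,Q):
   P = {x | x . n = c1},  Q = {x | x . n = c2}, with n a unit vector, c1 <> c2. *)
Record linepair := LP { lp_n : pt; lp_c1 : R; lp_c2 : R }.

Definition valid_lp (L : linepair) : Prop :=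
  dot (lp_n L) (lp_n L) = 1 /\ lp_c1 L <> lp_c2 L.

(* A similarity h_(P,Q) sending P to {x_1 = -3} and Q to {x_1 = 3}
   (rotation x |-> (x.n, x.n^perp), scaling by 6/(c2-c1), translation). *)
Definition h_lp (L : linepair) (x : pt) : pt :=
  let n := lp_n L in
  let nperp := (- snd n, fst n) in
  let k := 6 / (lp_c2 L - lp_c1 L) in
  (-3 + k * (dot x n - lp_c1 L), k * dot x nperp).

Definition g_lp (L : linepair) (x : pt) : R := g (h_lp L x).

Fixpoint chain_le (x : R) (l : list R) : Prop :=
  match l with
  | nil => True
  | y :: l' => x <= y /\ chain_le y l'
  end.

Fixpoint last_of (x : R) (l : list R) : R :=
  match l with
  | nil => x
  | y :: l' => last_of y l'
  end.

Definition part_ok (a b a0 : R) (rest : list R) : Prop :=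
  a <= a0 /\ chain_le a0 rest /\ last_of a0 rest <= b.

Fixpoint osc_sum (G : pt -> R) (f : R -> pt) (x : R) (l : list R) : R :=
  match l with
  | nil => 0
  | y :: l' => - (G (f x) * G (f y)) + osc_sum G f y l'
  end.

Definition osc (L : linepair) (f : R -> pt) (a b : R) : Rbar :=
  Lub_Rbar (fun v => exists a0 rest, part_ok a b a0 rest /\
                                     v = osc_sum (g_lp L) f a0 rest).

Definition frac_o (o : Rbar) : R :=
  match o with
  | Finite x => x / (1 + x)
  | p_infty => 1
  | m_infty => 0
  end.

(* Total oscillation T(f|[a,b]) w.r.t. the fixed enumeration E (E i = (P_{i+1},Q_{i+1})). *)
Definition total_osc (E : nat -> linepair) (f : R -> pt) (a b : R) : R :=
  Series (fun i => (/ 2) ^ (S i) * frac_o (osc (E i) f a b)).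

(* E is a countable dense set of pairs of parallel lines: every pair is
   approximated, in either of its two (n,c1,c2)/(-n,-c1,-c2) representations. *)
Definition close_lp (eps : R) (L M : linepair) : Prop :=
  dist2 (lp_n L) (lp_n M) < eps /\ Rabs (lp_c1 L - lp_c1 M) < eps /\
  Rabs (lp_c2 L - lp_c2 M) < eps.

Definition neg_lp (L : linepair) : linepair :=
  LP (- fst (lp_n L), - snd (lp_n L)) (- lp_c1 L) (- lp_c2 L).

Definition dense_enum (E : nat -> linepair) : Prop :=
  (forall i, valid_lp (E i)) /\
  (forall L, valid_lp L -> forall eps, eps > 0 ->
     exists i, close_lp eps (E i) L \/ close_lp eps (E i) (neg_lp L)).

Definition cont_on (f : R -> pt) (a b : R) : Prop :=
  forall s, a <= s <= b -> forall eps, eps > 0 -> exists delta, delta > 0 /\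
    forall s', a <= s' <= b -> Rabs (s' - s) < delta -> dist2 (f s') (f s) < eps.

Definition is_path (X : pt -> Prop) (f : R -> pt) : Prop :=
  cont_on f 0 1 /\ forall s, 0 <= s <= 1 -> X (f s).

Definition homotopic_rel (X : pt -> Prop) (alpha beta : R -> pt) : Prop :=
  exists H : R -> R -> pt,
    (forall s u, 0 <= s <= 1 -> 0 <= u <= 1 -> X (H s u)) /\
    (forall s u, 0 <= s <= 1 -> 0 <= u <= 1 -> forall eps, eps > 0 ->
       exists delta, delta > 0 /\ forall s' u', 0 <= s' <= 1 -> 0 <= u' <= 1 ->
         Rabs (s' - s) < delta -> Rabs (u' - u) < delta ->
         dist2 (H s' u') (H s u) < eps) /\
    (forall s, 0 <= s <= 1 -> H s 0 = alpha s /\ H s 1 = beta s) /\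
    (forall u, 0 <= u <= 1 -> H 0 u = alpha 0 /\ H 1 u = alpha 1).

Definition osc_geodesic (E : nat -> linepair) (X : pt -> Prop) (alpha : R -> pt) : Prop :=
  is_path X alpha /\
  forall beta, is_path X beta -> homotopic_rel X alpha beta ->
    total_osc E alpha 0 1 <= total_osc E beta 0 1.

Definition prop_param (E : nat -> linepair) (alpha : R -> pt) : Prop :=
  forall t, 0 <= t <= 1 -> total_osc E alpha 0 t = t * total_osc E alpha 0 1.

Definition nonconstant (alpha : R -> pt) : Prop :=
  exists s, 0 <= s <= 1 /\ alpha s <> alpha 0.

Definition transverse (v : pt) (gamma : R -> pt) (a b : R) : Prop :=
  ~ (exists c d, a <= c /\ c < d /\ d <= b /\
       exists q r0 r1, forall s, c < s < d ->
         exists r, r0 <= r <= r1 /\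
           gamma s = (fst q + r * fst v, snd q + r * snd v)).

From Stdlib Require Import Reals List.
From Coquelicot Require Import Coquelicot.
From Stdlib Require Import Lra Lia Psatz Classical ClassicalEpsilon.
From Stdlib Require Cantor.
Open Scope R_scope.

(* Two distinct points are separated (g = -1 at one, g = 1 at the other) by
   some pair of the dense family, so a nonconstant path has positive total
   oscillation.  A path parameterized proportionally to total oscillation
   therefore cannot be constant on any interval: there the total oscillation
   of its initial segments would not grow.  Hence on each of the countably
   many intervals with endpoints j/(N+1), (j+1)/(N+1), a path alpha_t can lie
   on a line of at most one slope.  Countably many paths yield countably many
   excluded slopes, and a line of any other slope is transverse to all of
   them, since every open subinterval of [0,1] contains such a grid
   interval. *)

(* Nested intervals, the [n+1]-th one missing [u n]: Cantor's argument. *)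
Fixpoint trisection (u : nat -> R) (n : nat) : R * R :=
  match n with
  | O => (0, 1)
  | S n => let (a, b) := trisection u n in
           if Rle_dec (u n) ((a + b) / 2) then ((a + 2 * b) / 3, b)
           else (a, (2 * a + b) / 3)
  end.

Lemma trisection_lt u n : fst (trisection u n) < snd (trisection u n).
Proof.
  induction n as [|n IH]; simpl; [lra|].
  destruct (trisection u n) as [a b]; simpl in IH.
  destruct (Rle_dec (u n) ((a + b) / 2)); simpl; lra.
Qed.

Lemma trisection_succ u n :
  fst (trisection u n) <= fst (trisection u (S n)) /\
  snd (trisection u (S n)) <= snd (trisection u n) /\
  ~ (fst (trisection u (S n)) <= u n <= snd (trisection u (S n))).
Proof.
  pose proof (trisection_lt u n) as Hlt; simpl.
  destruct (trisection u n) as [a b]; simpl in Hlt |- *.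
  destruct (Rle_dec (u n) ((a + b) / 2)); simpl; lra.
Qed.

Lemma trisection_mono u m n : (m <= n)%nat ->
  fst (trisection u m) <= fst (trisection u n) /\
  snd (trisection u n) <= snd (trisection u m).
Proof.
  induction 1 as [|n _ IH]; [lra|].
  pose proof (trisection_succ u n); lra.
Qed.

Lemma trisection_fst_le_snd u m n : fst (trisection u m) <= snd (trisection u n).
Proof.
  destruct (trisection_mono u m (max m n)) as [Hm _]; [lia|].
  destruct (trisection_mono u n (max m n)) as [_ Hn]; [lia|].
  pose proof (trisection_lt u (max m n)); lra.
Qed.

Lemma R_not_enumerable (u : nat -> R) : exists x, forall n, x <> u n.
Proof.
  destruct (completeness (fun r => exists n, r = fst (trisection u n)))
    as [x [Hub Hlub]].
  - exists (snd (trisection u 0)); intros r [n ->]; apply trisection_fst_le_snd.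
  - exists (fst (trisection u 0)); eauto.
  - exists x; intros n Hx.
    apply (trisection_succ u n); rewrite <- Hx; split.
    + apply Hub; eauto.
    + apply Hlub; intros r [m ->]; apply trisection_fst_le_snd.
Qed.

Lemma exists_R_avoiding (A : Type) (enc : A -> nat) (P : A -> R -> Prop) :
  (forall a b, enc a = enc b -> a = b) ->
  (forall a y y', P a y -> P a y' -> y = y') ->
  exists y, forall a, ~ P a y.
Proof.
  intros Henc Huniq.
  set (choice n := epsilon (inhabits 0) (fun y => exists a, enc a = n /\ P a y)).
  destruct (R_not_enumerable choice) as [y Hy].
  exists y; intros a Hay.
  destruct (epsilon_spec (inhabits 0) (fun y => exists a', enc a' = enc a /\ P a' y))
    as [a' [Ha' Hchoice]]; [eauto|].
  apply Henc in Ha'; subst a'.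
  exact (Hy (enc a) (Huniq a _ _ Hay Hchoice)).
Qed.

Lemma gfun_le_m3 x : x <= -3 -> gfun x = -1.
Proof. intros; unfold gfun; destruct (Rle_dec x (-3)); lra. Qed.

Lemma gfun_ge_3 x : 3 <= x -> gfun x = 1.
Proof.
  intros; unfold gfun.
  destruct (Rle_dec x (-3)); [lra|].
  destruct (Rle_dec x (-1)); [lra|].
  destruct (Rle_dec x 1); [lra|].
  destruct (Rle_dec x 3); [|lra].
  replace x with 3 by lra; field.
Qed.

Lemma g_lp_separates M x0 xs :
  dot x0 (lp_n M) <= lp_c1 M -> lp_c1 M < lp_c2 M -> lp_c2 M <= dot xs (lp_n M) ->
  g_lp M x0 = -1 /\ g_lp M xs = 1.
Proof.
  intros H0 H12 Hs; unfold g_lp, g, h_lp; simpl.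
  assert (Hk : 0 < 6 / (lp_c2 M - lp_c1 M)) by (apply Rdiv_lt_0_compat; lra).
  assert (Hk6 : 6 / (lp_c2 M - lp_c1 M) * (lp_c2 M - lp_c1 M) = 6) by (field; lra).
  split; [apply gfun_le_m3 | apply gfun_ge_3]; nra.
Qed.

Lemma h_lp_neg L x : h_lp (neg_lp L) x = h_lp L x.
Proof.
  unfold h_lp, neg_lp, dot; simpl.
  replace (- lp_c2 L - - lp_c1 L) with (- (lp_c2 L - lp_c1 L)) by ring.
  unfold Rdiv; rewrite Rinv_opp; f_equal; ring.
Qed.

Lemma g_lp_neg L x : g_lp (neg_lp L) x = g_lp L x.
Proof. unfold g_lp; now rewrite h_lp_neg. Qed.

Lemma close_lp_neg eps L M : close_lp eps M (neg_lp L) -> close_lp eps (neg_lp M) L.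
Proof.
  unfold close_lp, neg_lp, dist2; cbn [fst snd lp_n lp_c1 lp_c2].
  replace (- lp_c1 M - lp_c1 L) with (- (lp_c1 M - - lp_c1 L)) by ring.
  replace (- lp_c2 M - lp_c2 L) with (- (lp_c2 M - - lp_c2 L)) by ring.
  rewrite !Rabs_Ropp.
  replace ((- fst (lp_n M) - fst (lp_n L)) ^ 2 + (- snd (lp_n M) - snd (lp_n L)) ^ 2)
    with ((fst (lp_n M) - - fst (lp_n L)) ^ 2 + (snd (lp_n M) - - snd (lp_n L)) ^ 2)
    by ring.
  tauto.
Qed.

Lemma Rabs_fst_le_dist2 x y : Rabs (fst x - fst y) <= dist2 x y.
Proof. eapply Rle_trans; [apply Rmax_l | apply sqrt_plus_sqr]. Qed.

Lemma Rabs_snd_le_dist2 x y : Rabs (snd x - snd y) <= dist2 x y.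
Proof. eapply Rle_trans; [apply Rmax_r | apply sqrt_plus_sqr]. Qed.

Lemma dot_dist2_le x n m :
  Rabs (dot x n - dot x m) <= (Rabs (fst x) + Rabs (snd x)) * dist2 n m.
Proof.
  replace (dot x n - dot x m)
    with (fst x * (fst n - fst m) + snd x * (snd n - snd m)) by (unfold dot; ring).
  eapply Rle_trans; [apply Rabs_triang|]; rewrite !Rabs_mult.
  pose proof (Rabs_fst_le_dist2 n m); pose proof (Rabs_snd_le_dist2 n m).
  pose proof (Rabs_pos (fst x)); pose proof (Rabs_pos (snd x)); nra.
Qed.

Lemma close_lp_separates eps L M x0 xs :
  close_lp eps M L ->
  dot x0 (lp_n L) + (Rabs (fst x0) + Rabs (snd x0) + 1) * eps <= lp_c1 L ->
  lp_c1 L + 2 * eps <= lp_c2 L ->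
  lp_c2 L + (Rabs (fst xs) + Rabs (snd xs) + 1) * eps <= dot xs (lp_n L) ->
  dot x0 (lp_n M) <= lp_c1 M /\ lp_c1 M < lp_c2 M /\ lp_c2 M <= dot xs (lp_n M).
Proof.
  intros [Hn [H1 H2]] H0 H12 Hs.
  apply Rabs_def2 in H1, H2.
  pose proof (dot_dist2_le x0 (lp_n M) (lp_n L)) as D0.
  pose proof (dot_dist2_le xs (lp_n M) (lp_n L)) as Ds.
  pose proof (Rle_abs (dot x0 (lp_n M) - dot x0 (lp_n L))).
  pose proof (Rle_abs (- (dot xs (lp_n M) - dot xs (lp_n L)))); rewrite Rabs_Ropp in *.
  pose proof (Rabs_pos (fst x0)); pose proof (Rabs_pos (snd x0)).
  pose proof (Rabs_pos (fst xs)); pose proof (Rabs_pos (snd xs)).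
  repeat split; nra.
Qed.

Lemma dense_enum_separates E x0 xs : dense_enum E -> x0 <> xs ->
  exists i, g_lp (E i) x0 = -1 /\ g_lp (E i) xs = 1.
Proof.
  intros [_ Hdense] Hne.
  set (w := (fst xs - fst x0, snd xs - snd x0)).
  assert (Hw : 0 < dot w w).
  { destruct x0 as [a1 a2], xs as [b1 b2]; unfold w, dot; simpl.
    destruct (Req_dec a1 b1), (Req_dec a2 b2); subst; try nra.
    now contradiction Hne. }
  set (D := sqrt (dot w w)).
  assert (HD : 0 < D) by now apply sqrt_lt_R0.
  assert (HDD : D * D = dot w w) by now apply sqrt_sqrt; lra.
  set (n := (fst w / D, snd w / D)).
  set (b := dot x0 n).
  (* [L] cuts the segment [x0, xs] at 1/3 and 2/3; every pair close to it still
     separates its endpoints. *)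
  set (L := LP n (b + D / 3) (b + 2 * D / 3)).
  assert (HL : valid_lp L).
  { split; simpl; [|lra].
    replace (dot n n) with (dot w w / (D * D)) by (unfold n, dot; simpl; field; lra).
    rewrite HDD; field; lra. }
  assert (Hxs : dot xs n = b + D).
  { replace (dot xs n) with (b + dot w w / D)
      by (unfold b, n, w, dot; simpl; field; lra).
    rewrite <- HDD; field; lra. }
  set (K := Rabs (fst x0) + Rabs (snd x0) + Rabs (fst xs) + Rabs (snd xs) + 2).
  pose proof (Rabs_pos (fst x0)); pose proof (Rabs_pos (snd x0)).
  pose proof (Rabs_pos (fst xs)); pose proof (Rabs_pos (snd xs)).
  set (eps := D / (3 * K)).
  assert (Heps : 0 < eps) by (apply Rdiv_lt_0_compat; unfold K; lra).
  assert (HeK : eps * K = D / 3) by (unfold eps, K; field; lra).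
  assert (Hsep : forall M, close_lp eps M L ->
            g_lp M x0 = -1 /\ g_lp M xs = 1).
  { intros M HM.
    destruct (close_lp_separates eps L M x0 xs HM) as [Hlo [H12 Hhi]];
      simpl; fold b; try rewrite Hxs; unfold K in HeK; try nra.
    now apply g_lp_separates. }
  destruct (Hdense L HL eps Heps) as [i [Hi | Hi]]; exists i.
  - now apply Hsep.
  - rewrite <- !(g_lp_neg (E i)); apply Hsep, close_lp_neg, Hi.
Qed.

Lemma chain_le_map (h : R -> R) : (forall x y, x <= y -> h x <= h y) ->
  forall l x, chain_le x l -> chain_le (h x) (map h l).
Proof.
  intros Hh l; induction l as [|y l IH]; simpl; intros x Hl; [easy|].
  destruct Hl; split; auto.
Qed.

Lemma last_of_map (h : R -> R) l x : last_of (h x) (map h l) = h (last_of x l).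
Proof. revert x; induction l; simpl; auto. Qed.

Lemma chain_le_bounds l x : chain_le x l ->
  forall y, In y (x :: l) -> x <= y <= last_of x l.
Proof.
  revert x; induction l as [|z l IH]; simpl; intros x Hl y Hy.
  - destruct Hy as [<- | []]; lra.
  - destruct Hl as [Hxz Hl].
    pose proof (IH z Hl z (or_introl eq_refl)).
    destruct Hy as [<- | Hy]; [lra|].
    pose proof (IH z Hl y Hy); lra.
Qed.

Lemma osc_sum_map G f (h : R -> R) l x :
  (forall y, In y (x :: l) -> f (h y) = f y) ->
  osc_sum G f (h x) (map h l) = osc_sum G f x l.
Proof.
  revert x; induction l as [|z l IH]; simpl; intros x Hf; [easy|].
  rewrite IH by (intros; apply Hf; simpl in *; tauto).
  now rewrite (Hf x), (Hf z) by tauto.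
Qed.

Lemma osc_sum_le_osc L f a b a0 rest : part_ok a b a0 rest ->
  Rbar_le (osc_sum (g_lp L) f a0 rest) (osc L f a b).
Proof. intros Hpart; apply Lub_Rbar_correct; eauto. Qed.

Lemma osc_nonneg L f a b : a <= b -> Rbar_le 0 (osc L f a b).
Proof.
  intros Hab; apply (osc_sum_le_osc L f a b a nil).
  repeat split; simpl; lra.
Qed.

Lemma osc_const_extend L f a c d : a <= c <= d ->
  (forall s, c <= s <= d -> f s = f c) -> osc L f a c = osc L f a d.
Proof.
  intros Hacd Hf; apply Lub_Rbar_eqset; intros v; split.
  - intros [a0 [rest [[H1 [H2 H3]] ->]]].
    exists a0, rest; repeat split; auto; lra.
  - intros [a0 [rest [[H1 [H2 H3]] ->]]].
    (* Clamping the partition at [c] keeps its sum, as [f] is constant on [c, d]. *)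
    set (clamp s := Rmin s c).
    assert (Hclamp : forall x y, x <= y -> clamp x <= clamp y).
    { intros x y Hxy; unfold clamp, Rmin.
      destruct (Rle_dec x c), (Rle_dec y c); lra. }
    exists (clamp a0), (map clamp rest); split; [split; [|split]|].
    + apply Rmin_glb; lra.
    + now apply chain_le_map.
    + rewrite last_of_map; apply Rmin_r.
    + symmetry; apply osc_sum_map; intros y Hy.
      pose proof (chain_le_bounds rest a0 H2 y Hy).
      unfold clamp, Rmin; destruct (Rle_dec y c); auto.
      symmetry; apply Hf; lra.
Qed.

Lemma frac_o_bounds o : Rbar_le 0 o -> 0 <= frac_o o <= 1.
Proof.
  destruct o as [x| |]; simpl; intros Ho; try lra.
  split; [apply Rdiv_le_0_compat; lra|].
  apply Rmult_le_reg_r with (1 + x); [lra|].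
  unfold Rdiv; rewrite Rmult_assoc, Rinv_l; lra.
Qed.

Lemma frac_o_pos o : Rbar_lt 0 o -> 0 < frac_o o.
Proof.
  destruct o as [x| |]; simpl; intros Ho; try lra.
  apply Rdiv_lt_0_compat; lra.
Qed.

Lemma Series_ge_term (a : nat -> R) i :
  (forall n, 0 <= a n) -> ex_series a -> a i <= Series a.
Proof.
  intros Ha Hex.
  assert (Hcv : Un_cv (sum_f_R0 a) (Series a))
    by now apply is_series_Reals, Series_correct.
  eapply Rle_trans; [|exact (sum_incr a i _ Hcv Ha)].
  destruct i as [|i]; simpl; [lra|].
  pose proof (cond_pos_sum a i Ha); lra.
Qed.

Lemma total_osc_term_bounds E f b n : 0 <= b ->
  0 <= (/ 2) ^ S n * frac_o (osc (E n) f 0 b) <= (/ 2) ^ n.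
Proof.
  intros Hb; pose proof (frac_o_bounds _ (osc_nonneg (E n) f 0 b Hb)).
  assert (0 <= (/ 2) ^ n) by (apply pow_le; lra).
  simpl; split; nra.
Qed.

Lemma total_osc_pos E f : dense_enum E -> nonconstant f -> 0 < total_osc E f 0 1.
Proof.
  intros HE [s [Hs Hne]].
  destruct (dense_enum_separates E (f 0) (f s) HE (not_eq_sym Hne)) as [i [H0 Hs1]].
  assert (Hosc : Rbar_lt 0 (osc (E i) f 0 1)).
  { eapply Rbar_lt_le_trans; [|apply (osc_sum_le_osc _ _ 0 1 0 (s :: nil))].
    - simpl; rewrite H0, Hs1; lra.
    - repeat split; simpl; lra. }
  pose proof (frac_o_pos _ Hosc).
  assert (0 < (/ 2) ^ S i) by (apply pow_lt; lra).
  unfold total_osc; eapply Rlt_le_trans; [|apply (Series_ge_term _ i)].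
  - nra.
  - intros n; apply (total_osc_term_bounds E f 1 n); lra.
  - apply (@ex_series_le R_AbsRing R_CompleteNormedModule _ (fun n => (/ 2) ^ n)).
    + intros n; rewrite Rabs_pos_eq; apply (total_osc_term_bounds E f 1 n); lra.
    + apply ex_series_geom; rewrite Rabs_pos_eq; lra.
Qed.

Lemma total_osc_const_extend E f c d : 0 <= c <= d ->
  (forall s, c <= s <= d -> f s = f c) -> total_osc E f 0 c = total_osc E f 0 d.
Proof.
  intros Hcd Hf; unfold total_osc; apply Series_ext; intros n.
  now rewrite (osc_const_extend _ f 0 c d).
Qed.

Lemma dist2_small_eq x y : (forall eps, eps > 0 -> dist2 x y < eps) -> x = y.
Proof.
  intros Hsmall.
  assert (Hd : dist2 x y <= 0).
  { destruct (Rle_lt_dec (dist2 x y) 0) as [|Hpos]; [easy|].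
    exfalso; exact (Rlt_irrefl _ (Hsmall _ Hpos)). }
  pose proof (Rabs_fst_le_dist2 x y); pose proof (Rabs_snd_le_dist2 x y).
  pose proof (Rabs_pos (fst x - fst y)); pose proof (Rabs_pos (snd x - snd y)).
  assert (fst x - fst y = 0) by (apply Rabs_eq_0; lra).
  assert (snd x - snd y = 0) by (apply Rabs_eq_0; lra).
  destruct x, y; simpl in *; f_equal; lra.
Qed.

Lemma cont_on_eq_of_approx f a b x P : cont_on f a b -> a <= x <= b ->
  (forall delta, delta > 0 ->
     exists s, a <= s <= b /\ Rabs (s - x) < delta /\ f s = P) ->
  f x = P.
Proof.
  intros Hcont Hx Happrox; symmetry; apply dist2_small_eq; intros eps Heps.
  destruct (Hcont x Hx eps Heps) as [delta [Hdelta Hnear]].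
  destruct (Happrox delta Hdelta) as [s [Hs [Hsx <-]]].
  now apply Hnear.
Qed.

Lemma cont_on_const_closure f a b c d P : cont_on f a b -> a <= c -> c < d -> d <= b ->
  (forall s, c < s < d -> f s = P) -> forall s, c <= s <= d -> f s = P.
Proof.
  intros Hcont Hac Hcd Hdb Hf s Hs.
  apply (cont_on_eq_of_approx f a b); [easy | lra |]; intros delta Hdelta.
  set (h := Rmin delta (d - c) / 4).
  assert (0 < Rmin delta (d - c)) by (apply Rmin_glb_lt; lra).
  pose proof (Rmin_l delta (d - c)); pose proof (Rmin_r delta (d - c)).
  destruct (Rle_lt_dec s ((c + d) / 2)).
  - exists (s + h); unfold h; repeat split;
      [lra | lra | rewrite Rabs_pos_eq; lra | apply Hf; split; lra].
  - exists (s - h); unfold h; repeat split;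
      [lra | lra | rewrite Rabs_left; lra | apply Hf; split; lra].
Qed.

Lemma prop_param_not_locally_constant E f c d :
  dense_enum E -> nonconstant f -> cont_on f 0 1 -> prop_param E f ->
  0 <= c -> c < d -> d <= 1 ->
  exists s1 s2, c < s1 < d /\ c < s2 < d /\ f s1 <> f s2.
Proof.
  intros HE Hnc Hcont Hpp Hc Hcd Hd.
  apply NNPP; intros Hconst.
  set (m := (c + d) / 2).
  assert (Hopen : forall s, c < s < d -> f s = f m).
  { intros s Hs; apply NNPP; intros Hne.
    apply Hconst; exists s, m; unfold m; repeat split; lra || easy. }
  pose proof (cont_on_const_closure f 0 1 c d _ Hcont Hc Hcd Hd Hopen) as Hclosed.
  assert (Hflat : total_osc E f 0 c = total_osc E f 0 d).
  { apply total_osc_const_extend; [lra|]; intros s Hs.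
    now rewrite (Hclosed s Hs), (Hclosed c) by (split; lra). }
  rewrite (Hpp c), (Hpp d) in Hflat by lra.
  pose proof (total_osc_pos E f HE Hnc); nra.
Qed.

Definition grid_point (N j : nat) : R := INR j / INR (S N).

Lemma grid_point_nonneg N j : 0 <= grid_point N j.
Proof. apply Rdiv_le_0_compat; [apply pos_INR | apply lt_0_INR; lia]. Qed.

Lemma grid_point_lt_succ N j : grid_point N j < grid_point N (S j).
Proof.
  apply Rmult_lt_compat_r; [apply Rinv_0_lt_compat, lt_0_INR; lia|].
  apply lt_INR; lia.
Qed.

Lemma grid_interval_inside c d : 0 <= c -> c < d ->
  exists N j, c <= grid_point N j /\ grid_point N (S j) <= d.
Proof.
  intros Hc Hcd.
  destruct (nfloor_ex (2 / (d - c))) as [N [_ HN]];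
    [left; apply Rdiv_lt_0_compat; lra|].
  set (M := INR (S N)).
  assert (HM : M = INR N + 1) by apply S_INR.
  assert (HM0 : 0 < M) by (pose proof (pos_INR N); lra).
  assert (Hwide : 2 < (d - c) * M).
  { replace 2 with (2 / (d - c) * (d - c)) by (field; lra).
    rewrite (Rmult_comm (d - c)); apply Rmult_lt_compat_r; lra. }
  destruct (nfloor_ex (c * M)) as [j [Hj1 Hj2]]; [nra|].
  exists N, (S j); unfold grid_point; fold M.
  rewrite !S_INR; split.
  - apply Rmult_le_reg_r with M; [lra|]; unfold Rdiv; rewrite Rmult_assoc, Rinv_l; lra.
  - apply Rmult_le_reg_r with M; [lra|]; unfold Rdiv; rewrite Rmult_assoc, Rinv_l; lra.
Qed.

Definition maps_into_line_of_slope (f : R -> pt) (c d y : R) : Prop :=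
  exists q : pt, forall s, c < s < d -> exists r, f s = (fst q + r, snd q + r * y).

Lemma line_slope_unique f c d y y' s1 s2 :
  c < s1 < d -> c < s2 < d -> f s1 <> f s2 ->
  maps_into_line_of_slope f c d y -> maps_into_line_of_slope f c d y' -> y = y'.
Proof.
  intros Hs1 Hs2 Hne [q Hq] [q' Hq'].
  destruct (Hq s1 Hs1) as [a1 Ha1], (Hq s2 Hs2) as [a2 Ha2].
  destruct (Hq' s1 Hs1) as [b1 Hb1], (Hq' s2 Hs2) as [b2 Hb2].
  assert (Ha : a2 - a1 <> 0).
  { intros Heq; apply Hne; rewrite Ha1, Ha2; now replace a2 with a1 by lra. }
  rewrite Ha1 in Hb1; rewrite Ha2 in Hb2.
  injection Hb1 as F1 S1; injection Hb2 as F2 S2.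
  apply Rmult_eq_reg_l with (a2 - a1); [nra | exact Ha].
Qed.

Definition encode_triple (I : Type) (enc : I -> nat) (a : I * nat * nat) : nat :=
  let '(t, N, j) := a in Cantor.to_nat (enc t, Cantor.to_nat (N, j)).

Lemma Cantor_to_nat_inj p q : Cantor.to_nat p = Cantor.to_nat q -> p = q.
Proof.
  intros Hpq; rewrite <- (Cantor.cancel_of_to p), <- (Cantor.cancel_of_to q).
  now f_equal.
Qed.

Lemma encode_triple_inj (I : Type) (enc : I -> nat) :
  (forall t1 t2, enc t1 = enc t2 -> t1 = t2) ->
  forall a b, encode_triple I enc a = encode_triple I enc b -> a = b.
Proof.
  intros Henc [[t N] j] [[t' N'] j'] Hcode.
  cbv beta iota delta [encode_triple] in Hcode.
  apply Cantor_to_nat_inj, pair_equal_spec in Hcode as [Ht HNj].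
  apply Henc in Ht; apply Cantor_to_nat_inj in HNj.
  injection HNj as -> ->; now subst.
Qed.

Lemma grid_slope_unique E f N j y y' :
  dense_enum E -> nonconstant f -> cont_on f 0 1 -> prop_param E f ->
  grid_point N (S j) <= 1 ->
  maps_into_line_of_slope f (grid_point N j) (grid_point N (S j)) y ->
  maps_into_line_of_slope f (grid_point N j) (grid_point N (S j)) y' -> y = y'.
Proof.
  intros HE Hnc Hcont Hpp Hle Hy Hy'.
  destruct (prop_param_not_locally_constant E f (grid_point N j) (grid_point N (S j)))
    as [s1 [s2 [Hs1 [Hs2 Hne]]]]; auto using grid_point_nonneg, grid_point_lt_succ.
  exact (line_slope_unique _ _ _ _ _ _ _ Hs1 Hs2 Hne Hy Hy').
Qed.

Lemma transverse_of_grid_slopes f y :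
  (forall N j, grid_point N (S j) <= 1 ->
     ~ maps_into_line_of_slope f (grid_point N j) (grid_point N (S j)) y) ->
  transverse (1, y) f 0 1.
Proof.
  intros Hgrid [c [d [Hc [Hcd [Hd [q [r0 [r1 Hseg]]]]]]]].
  destruct (grid_interval_inside c d Hc Hcd) as [N [j [Hcj Hjd]]].
  apply (Hgrid N j); [lra|].
  exists q; intros s Hs.
  destruct (Hseg s) as [r [_ Hr]]; [lra|].
  exists r; rewrite Hr; simpl; now rewrite Rmult_1_r.
Qed.

Theorem lemma4p6 :
  forall (E : nat -> linepair), dense_enum E ->
  forall (X : pt -> Prop) (I : Type) (enc : I -> nat),
    (forall t1 t2, enc t1 = enc t2 -> t1 = t2) ->
  forall alpha : I -> R -> pt,
    (forall t, nonconstant (alpha t) /\ osc_geodesic E X (alpha t) /\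
               prop_param E (alpha t)) ->
  exists (p v : pt), v <> (0, 0) /\ forall t, transverse v (alpha t) 0 1.
Proof.
  intros E HE X I enc Henc alpha Halpha.
  (* The bound keeps the grid interval inside [0, 1], where the slope is unique. *)
  set (bad (a : I * nat * nat) y :=
         let '(t, N, j) := a in grid_point N (S j) <= 1 /\
         maps_into_line_of_slope (alpha t) (grid_point N j) (grid_point N (S j)) y).
  destruct (exists_R_avoiding _ (encode_triple I enc) bad) as [y Hy].
  - now apply encode_triple_inj.
  - intros [[t N] j] y1 y2 [Hle H1] [_ H2].
    destruct (Halpha t) as [Hnc [[[Hcont _] _] Hpp]].
    exact (grid_slope_unique E _ N j y1 y2 HE Hnc Hcont Hpp Hle H1 H2).
  - exists (0, 0), (1, y); split; [intros H; injection H; lra|].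
    intros t; apply transverse_of_grid_slopes; intros N j Hle Hslope.
    exact (Hy (t, N, j) (conj Hle Hslope)).
Qed.
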